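(* Let $V$ be a finite-dimensional super vector space over a field of characteristic $0$ and let $\omega:V\times V\to V$ be a bilinear map with $\omega(V_\alpha,V_\beta)\subseteq V_{\alpha+\beta}$. For $x\in V$ let $\mathrm{ad}_\omega(x)\in\mathfrak{gl}(V)$ be $\mathrm{ad}_\omega(x)(y)=\omega(x,y)$, and let $\mathcal{F}_\omega=\{\mathrm{ad}_\omega(x)+x: x\in V\}\subseteq\mathcal{E}=\mathfrak{gl}(V)\oplus V$. Then $(V,\omega)$ is a Lie superalgebra (with bracket $[x,y]=\omega(x,y)$) if and only if $\mathcal{F}_\omega=\mathcal{F}_\omega^{\perp}$ and $\mathcal{F}_\omega$ is closed under the bracket $[\![\cdot,\cdot]\!]$.
   Context: $\mathfrak{gl}(V)$: linear endomorphisms of $V$ with natural $\mathbb{Z}_2$-grading and supercommutator $[A,B]=AB-(-1)^{|A||B|}BA$. $\mathcal{E}=\mathfrak{gl}(V)\oplus V$ graded by $\mathcal{E}_\alpha=\mathfrak{gl}(V)_\alpha\oplus V_\alpha$, homogeneous elements $A+x$ with $|A|=|x|$. Bracket: $[\![A+x,B+y]\!]=[A,B]+\tfrac12(Ay-(-1)^{|x||y|}Bx)$; $V$-valued pairing: $\langle A+x,B+y\rangle=\tfrac12(Ay+(-1)^{|x||y|}Bx)$ (both extended bilinearly). For a subspace $F\subseteq\mathcal{E}$, $F^\perp=\{e\in\mathcal{E}:\langle e,f\rangle=0\ \forall f\in F\}$. A Lie superalgebra is a super vector space $L$ with bilinear bracket satisfying $[L_\alpha,L_\beta]\subseteq L_{\alpha+\beta}$,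 super skew-symmetry $[x,y]=-(-1)^{|x||y|}[y,x]$, and the super Jacobi identity $[x,[y,z]]=[[x,y],z]+(-1)^{|x||y|}[y,[x,z]]$ for homogeneous $x,y,z$. *)

From HB Require Import structures.
From mathcomp Require Import all_boot all_order all_algebra.
Set Implicit Arguments. Unset Strict Implicit. Unset Printing Implicit Defensive.
Import Order.TTheory GRing.Theory Num.Theory.
Local Open Scope ring_scope.

(* A finite-dimensional super vector space V = V_0 (+) V_1 over F is modelled
   as the product (V0 * V1) of two finite-dimensional F-vector spaces.
   Parities are booleans: false = 0 (even), true = 1 (odd). *)
Section Super.
Variables (F : fieldType) (V0 V1 : vectType F).
Local Notation V := (V0 * V1)%type.

Definition compV (a : bool) (v : V) : V := if a then (0, v.2) else (v.1, 0).
Definition is_hom (a : bool) (v : V) : Prop := compV a v = v.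

Definition ssign (a b : bool) : F := if a && b then -1 else 1.

Definition compGL (a : bool) (A : V -> V) : V -> V :=
  fun v => \sum_(b : bool) compV (a (+) b) (A (compV b v)).

Definition scomm (A B : V -> V) : V -> V :=
  fun v => \sum_(a : bool) \sum_(b : bool)
     (compGL a A (compGL b B v) - ssign a b *: compGL b B (compGL a A v)).

Definition Elt := ((V -> V) * V)%type.
Definition inE (e : Elt) : Prop := linear e.1.

Definition Ebracket (e f : Elt) : Elt :=
  (scomm e.1 f.1,
   \sum_(a : bool) \sum_(b : bool)
     2%:R^-1 *: (compGL a e.1 (compV b f.2)
                 - ssign a b *: compGL b f.1 (compV a e.2))).

Definition Epair (e f : Elt) : V :=
  \sum_(a : bool) \sum_(b : bool)
     2%:R^-1 *: (compGL a e.1 (compV b f.2)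
                 + ssign a b *: compGL b f.1 (compV a e.2)).

Definition adw (w : V -> V -> V) (x : V) : V -> V := fun y => w x y.
Definition inFw (w : V -> V -> V) (e : Elt) : Prop :=
  exists x : V, e.2 = x /\ forall v, e.1 v = adw w x v.

Definition inPerp (P : Elt -> Prop) (e : Elt) : Prop :=
  inE e /\ forall f, P f -> Epair e f = 0.

Definition IsLieSuperalgebra (w : V -> V -> V) : Prop :=
  [/\ (forall x, linear (w x)), (forall y, linear (fun x => w x y)),
      (forall a b x y, is_hom a x -> is_hom b y -> is_hom (a (+) b) (w x y)),
      (forall a b x y, is_hom a x -> is_hom b y -> w x y = - (ssign a b *: w y x)) &
      (forall a b c x y z, is_hom a x -> is_hom b y -> is_hom c z ->
         w x (w y z) = w (w x y) z + ssign a b *: w y (w x z))].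

End Super.

From HB Require Import structures.
From mathcomp Require Import all_boot all_order all_algebra.
From Stdlib Require Import FunctionalExtensionality.
Import GRing.Theory.
Local Open Scope ring_scope.
Set Implicit Arguments. Unset Strict Implicit.

(* Write ad x for the operator y |-> w x y, so F_w = { ad x + x }.  Both the
   pairing and the bracket of E are defined componentwise on homogeneous
   parts, and the degree-a part of ad x is ad of the degree-a part of x
   (lemma compGL_adw).  Hence, for x_a, y_b homogeneous,
     <ad x_a + x_a, ad y_b + y_b> = 1/2 (w x_a y_b + (-1)^{ab} w y_b x_a),
     [[ad x + x, ad y + y]]       = [ad x, ad y] + 1/2 sum (w x_a y_b - (-1)^{ab} w y_b x_a).
   Since 2 is invertible, the first identity shows that F_w is isotropic iff
   w is super skew-symmetric; maximality (F_w^perp <= F_w) then also follows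
   from skew-symmetry by pairing a general A + z against every ad y + y.
   Under skew-symmetry the V-part of the bracket is w x y, so closure of F_w
   under the bracket says [ad x, ad y] = ad (w x y), which is exactly the super
   Jacobi identity. *)

Section LinearFacts.
Variables (F : fieldType) (U W : lmodType F) (f : U -> W).
Hypothesis f_lin : linear f.

Lemma lin_add u v : f (u + v) = f u + f v.
Proof. by have := f_lin 1 u v; rewrite !scale1r. Qed.

Lemma lin0 : f 0 = 0.
Proof. by apply: (addIr (f 0)); rewrite -lin_add !add0r. Qed.

End LinearFacts.

Section Components.
Variables (F : fieldType) (V0 V1 : vectType F).
Local Notation V := (V0 * V1)%type.

Lemma compVK a b (v : V) : compV a (compV b v) = if a == b then compV b v else 0.
Proof. by case: a; case: b. Qed.

Lemma compV_split (v : V) : compV false v + compV true v = v.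
Proof. by case: v => v1 v2 /=; rewrite /GRing.add /= /add_pair /= addr0 add0r. Qed.

Lemma compV_splitC (v : V) : compV true v + compV false v = v.
Proof. by rewrite addrC compV_split. Qed.

Lemma compVD a (u v : V) : compV a (u + v) = compV a u + compV a v.
Proof.
by case: a; case: u => ? ?; case: v => ? ? /=; rewrite /GRing.add /= /add_pair /= addr0.
Qed.

Lemma compV0 a : compV a (0 : V) = 0.
Proof. by case: a. Qed.

Lemma compV_hom a b (v : V) : is_hom a v -> compV b v = if b == a then v else 0.
Proof. by move=> v_hom; rewrite -{1}v_hom compVK v_hom. Qed.

Lemma compV_is_hom a (v : V) : is_hom a (compV a v).
Proof. by rewrite /is_hom compVK eqxx. Qed.

Local Arguments compV : simpl never.

Lemma compGL_hom A a b (v : V) : linear A ->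
  compGL a A (compV b v) = compV (a (+) b) (A (compV b v)).
Proof.
move=> A_lin; rewrite /compGL big_bool /= !compVK.
by case: a; case: b => /=; rewrite ?(lin0 A_lin) ?compV0 ?addr0 ?add0r.
Qed.

Lemma compGL0 A a : linear A -> compGL a A (0 : V) = 0.
Proof. by move=> A_lin; rewrite /compGL big_bool /= !compV0 (lin0 A_lin) !compV0 addr0. Qed.

End Components.

Section GradedBilinear.
Variables (F : fieldType) (V0 V1 : vectType F).
Local Notation V := (V0 * V1)%type.
Variable w : V -> V -> V.
Hypothesis w_linl : forall y, linear (fun x => w x y).
Hypothesis w_linr : forall x, linear (w x).
Hypothesis w_graded : forall (a b : bool) (x y : V),
  is_hom a x -> is_hom b y -> is_hom (a (+) b) (w x y).

Local Arguments compV : simpl never.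

Lemma wDl x x' y : w (x + x') y = w x y + w x' y. Proof. exact: (lin_add (w_linl y)). Qed.
Lemma wDr x y y' : w x (y + y') = w x y + w x y'. Proof. exact: (lin_add (w_linr x)). Qed.
Lemma w0l y : w 0 y = 0. Proof. exact: (lin0 (w_linl y)). Qed.
Lemma w0r x : w x 0 = 0. Proof. exact: (lin0 (w_linr x)). Qed.

Lemma w_expand x y : w x y = \sum_(a : bool) \sum_(b : bool) w (compV a x) (compV b y).
Proof. by rewrite !big_bool /= -!wDr !compV_splitC -wDl compV_splitC. Qed.

(* The degree-a component of ad x is ad of the degree-a component of x;
   this is where the grading of w is used. *)
Lemma compGL_adw a x v : compGL a (w x) v = w (compV a x) v.
Proof.
have w_deg c a' b' : compV c (w (compV a' x) (compV b' v)) =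
    if c == a' (+) b' then w (compV a' x) (compV b' v) else 0.
  by apply: compV_hom; apply: w_graded; apply: compV_is_hom.
rewrite /compGL big_bool.
rewrite -[in w x (compV true v)](compV_split x) -[in w x (compV false v)](compV_split x).
rewrite !wDl !compVD !w_deg [RHS](w_expand (compV a x)) !big_bool !compVK.
by case: a => /=; rewrite ?w0l ?addr0 ?add0r // addrC.
Qed.

Definition super_skew := forall a b x y, is_hom a x -> is_hom b y ->
  w x y = - (ssign F a b *: w y x).

Definition super_jacobi := forall a b c x y z, is_hom a x -> is_hom b y -> is_hom c z ->
  w x (w y z) = w (w x y) z + ssign F a b *: w y (w x z).

Lemma skew_sign a b y z : super_skew ->
  ssign F a b *: w (compV b y) (compV a z) = - w (compV a z) (compV b y).
Proof.
move=> skew; rewrite (skew b a _ _ (compV_is_hom _ _) (compV_is_hom _ _)) scalerN scalerA.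
by case: a; case: b; rewrite /ssign /= ?mulrNN ?mulr1 ?scale1r.
Qed.

Lemma jacobi_any : super_jacobi -> forall a b x y z, is_hom a x -> is_hom b y ->
  w x (w y z) = w (w x y) z + ssign F a b *: w y (w x z).
Proof.
move=> jac a b x y z x_hom y_hom; rewrite -[z]compV_split !wDr.
rewrite (jac a b false x y _ x_hom y_hom (compV_is_hom _ _)).
by rewrite (jac a b true x y _ x_hom y_hom (compV_is_hom _ _)) scalerDr addrACA.
Qed.

Lemma inFw_adw x : inFw w (w x, x).
Proof. by exists x. Qed.

Lemma inFwE (e : Elt V0 V1) : inFw w e -> exists x, e = (w x, x).
Proof.
case: e => A z [x [/= -> A_eq]]; exists x; congr (_, _).
by apply: functional_extensionality => v; rewrite A_eq.
Qed.

Lemma Epair_adw x y : Epair (w x, x) (w y, y) = \sum_(a : bool) \sum_(b : bool)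
  2%:R^-1 *: (w (compV a x) (compV b y) + ssign F a b *: w (compV b y) (compV a x)).
Proof. by apply: eq_bigr => a _; apply: eq_bigr => b _; rewrite /= !compGL_adw. Qed.

Lemma Ebracket_adw_gl x y v : (Ebracket (w x, x) (w y, y)).1 v =
  \sum_(a : bool) \sum_(b : bool)
     (w (compV a x) (w (compV b y) v) - ssign F a b *: w (compV b y) (w (compV a x) v)).
Proof. by apply: eq_bigr => a _; apply: eq_bigr => b _; rewrite !compGL_adw. Qed.

Hypothesis two_neq0 : (2%:R : F) != 0.

Lemma half_eq0 (u : V) : 2%:R^-1 *: u = 0 -> u = 0.
Proof. by move=> hu; rewrite -[u]scale1r -(mulfV two_neq0) -scalerA hu scaler0. Qed.

Lemma half_double (u : V) : 2%:R^-1 *: (u + u) = u.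
Proof. by rewrite -mulr2n -scaler_nat scalerA mulVf // scale1r. Qed.

Lemma Ebracket_adw_V x y : super_skew -> (Ebracket (w x, x) (w y, y)).2 = w x y.
Proof.
move=> skew; rewrite /Ebracket /= [RHS]w_expand.
apply: eq_bigr => a _; apply: eq_bigr => b _.
by rewrite !compGL_adw (skew_sign _ _ _ _ skew) opprK half_double.
Qed.

Lemma skew_Epair_adw : super_skew -> forall x y, Epair (w x, x) (w y, y) = 0.
Proof.
move=> skew x y; rewrite Epair_adw big1 // => a _; rewrite big1 // => b _.
by rewrite (skew a b _ _ (compV_is_hom _ _) (compV_is_hom _ _)) addrC subrr scaler0.
Qed.

Lemma Epair_adw_skew : (forall x y, Epair (w x, x) (w y, y) = 0) -> super_skew.
Proof.
move=> iso a b x y x_hom y_hom; have := iso x y.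
rewrite Epair_adw !big_bool !(compV_hom _ x_hom) !(compV_hom _ y_hom).
case: a {x_hom}; case: b {y_hom} => /=; rewrite ?(w0l, w0r, scaler0, addr0, add0r);
  by move/half_eq0/eqP; rewrite addr_eq0 => /eqP.
Qed.

(* Maximality: under skew-symmetry, an element A + z orthogonal to F_w
   satisfies A = ad z.  Pairing against ad v_b + v_b isolates A v_b. *)
Lemma perp_is_adw : super_skew -> forall A z, linear A ->
  (forall y, Epair (A, z) (w y, y) = 0) -> forall v, A v = w z v.
Proof.
move=> skew A z A_lin perp v.
suff on_hom b : A (compV b v) = w z (compV b v).
  by rewrite -[v]compV_split (lin_add A_lin) wDr !on_hom.
have := perp (compV b v); rewrite /Epair /=.
under eq_bigr => a _ do under eq_bigr => b' _ do rewrite compGL_adw !compVK.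
rewrite !big_bool.
case: b => /=; rewrite ?(compGL0 _ A_lin, w0l, scaler0, addr0, add0r)
  !(skew_sign _ _ _ _ skew) !(compGL_hom _ _ _ A_lin) /= -!scalerDr => /half_eq0/eqP;
  by rewrite addrACA -opprD -wDl subr_eq0 ?compV_split ?compV_splitC => /eqP.
Qed.

Lemma Fw_lagrangian_iff :
  (forall e : Elt V0 V1, inFw w e <-> inPerp (inFw w) e) <-> super_skew.
Proof.
split=> [lagr | skew e].
  apply: Epair_adw_skew => x y.
  by have [_ iso] := (lagr (w x, x)).1 (inFw_adw x); apply: iso (inFw_adw y).
split=> [/inFwE [x ->] | ].
  by split=> [|f /inFwE [y ->]]; [exact: w_linr | exact: skew_Epair_adw].
case: e => A z [A_lin perp]; exists z; split=> // v.
by apply: perp_is_adw => // y; apply: perp; apply: inFw_adw.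
Qed.

Lemma jacobi_Ebracket_adw : super_skew -> super_jacobi -> forall x y v,
  (Ebracket (w x, x) (w y, y)).1 v = w (Ebracket (w x, x) (w y, y)).2 v.
Proof.
move=> skew jac x y v; rewrite Ebracket_adw_gl Ebracket_adw_V //.
transitivity (\sum_(a : bool) \sum_(b : bool) w (w (compV a x) (compV b y)) v).
  apply: eq_bigr => a _; apply: eq_bigr => b _.
  by rewrite (jacobi_any jac v (compV_is_hom a x) (compV_is_hom b y)) addrK.
by rewrite (w_expand x y) !big_bool /= !wDl.
Qed.

Lemma Ebracket_adw_jacobi : super_skew -> (forall x y v,
  (Ebracket (w x, x) (w y, y)).1 v = w (Ebracket (w x, x) (w y, y)).2 v) -> super_jacobi.
Proof.
move=> skew closed a b c x y z x_hom y_hom _; have := closed x y z.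
rewrite Ebracket_adw_gl Ebracket_adw_V // !big_bool /= !(compV_hom _ x_hom) !(compV_hom _ y_hom).
case: a {x_hom}; case: b {y_hom} => /=; rewrite ?(w0l, w0r, scaler0, subr0, oppr0, addr0, add0r);
  by move=> <-; rewrite subrK.
Qed.

Lemma Fw_closed_iff : super_skew ->
  (forall e f : Elt V0 V1, inFw w e -> inFw w f -> inFw w (Ebracket e f)) <-> super_jacobi.
Proof.
move=> skew; split=> [closed | jac e f /inFwE [x ->] /inFwE [y ->]].
  apply: Ebracket_adw_jacobi => // x y v.
  by have [z [-> ->]] := closed _ _ (inFw_adw x) (inFw_adw y).
by exists (Ebracket (w x, x) (w y, y)).2; split=> // v; apply: jacobi_Ebracket_adw.
Qed.

End GradedBilinear.

Theorem mainTheorem3 (F : fieldType) (V0 V1 : vectType F)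
  (charF0 : [pchar F] =i pred0)
  (w : (V0 * V1)%type -> (V0 * V1)%type -> (V0 * V1)%type)
  (w_linl : forall y, linear (fun x => w x y))
  (w_linr : forall x, linear (w x))
  (w_graded : forall (a b : bool) (x y : (V0 * V1)%type),
      is_hom a x -> is_hom b y -> is_hom (a (+) b) (w x y)) :
  IsLieSuperalgebra w <->
  ((forall e : Elt V0 V1, inFw w e <-> inPerp (inFw w) e) /\
   (forall e f : Elt V0 V1, inFw w e -> inFw w f -> inFw w (Ebracket e f))).
Proof.
have two_neq0 : (2%:R : F) != 0 by move/pcharf0P: charF0 => ->.
have lagr_iff := Fw_lagrangian_iff w_linl w_linr w_graded two_neq0.
split=> [[_ _ _ skew jac] | [lagr closed]].
  split; first exact/lagr_iff.
  by apply/(Fw_closed_iff w_linl w_linr w_graded two_neq0).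
have skew : super_skew w by apply/lagr_iff.
split=> //; apply/(Fw_closed_iff w_linl w_linr w_graded two_neq0 skew).
exact: closed.
Qed.
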